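(* Let $3\le K\le N$, $M\in[0,N]$, and $\mathbf p$ with $p_1\ge\dots\ge p_N$. For every $\mathbf a\in\mathcal Q$ and every demand vector $\mathbf d\in[N]^K$ with $K$ pairwise distinct entries, $R_{\mathrm{MCCS}}(\mathbf d;\mathbf a)=R_{\mathrm{lb}}(\mathcal D(\mathbf d);\mathbf a)$. Consequently, restricting to demands with all-distinct requests (with probabilities $\prod_i p_{d_i}$ normalized over the set $\mathcal T_K$ of such demand vectors), $$\min_{\mathbf a\text{ feasible},\,\mathbf a\in\mathcal Q}\ \sum_{\mathbf d\in\mathcal T_K}\tfrac{\prod_i p_{d_i}}{Z}R_{\mathrm{MCCS}}(\mathbf d;\mathbf a)=\min_{\mathbf a\text{ feasible},\,\mathbf a\in\mathcal Q}\ \sum_{\mathbf d\in\mathcal T_K}\tfrac{\prod_i p_{d_i}}{Z}R_{\mathrm{lb}}(\mathcal D(\mathbf d);\mathbf a),$$ where $Z=\sum_{\mathbf d\in\mathcal T_K}\prod_i p_{d_i}$; i.e. the optimized MCCS attains the popularity-first-based lower bound (P2) in this regime.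
   Context: Setting: $N$ files with request probabilities $p_1\ge\dots\ge p_N$ ($\sum p_n=1$), all $p_n>0$ assumed so that $Z>0$; $K$ users, cache size $M$. $[m]=\{1,\dots,m\}$; $\binom{m}{l}=0$ if $l>m$ or $m<0$. For $\mathbf d\in[N]^K$, $\mathcal D(\mathbf d)$ is the set of distinct entries; $\mathcal T_K=\{\mathbf d\in[N]^K: |\mathcal D(\mathbf d)|=K\}$. A placement vector $\mathbf a=(a_{n,l})_{n\in[N],0\le l\le K}$ is feasible if (i) $a_{n,l}\ge0$; (ii) $\sum_{l=0}^K\binom{K}{l}a_{n,l}=1$ for each $n$; (iii) $\sum_{n=1}^N\sum_{l=1}^K\binom{K-1}{l-1}a_{n,l}\le M$. The popularity-first set is $\mathcal Q=\{\mathbf a: a_{n,l}\ge a_{n+1,l}\ \forall n\in[N-1],\ l\in[K]\}$. $R_{\mathrm{lb}}(\mathcal D;\mathbf a)=\max_{\pi}\sum_{l=0}^{K-1}\sum_{i=1}^{|\mathcal D|}\binom{K-i}{l}a_{\pi(i),l}$ over bijections $\pi:[|\mathcal D|]\to\mathcal D$. MCCS rate: for a demand $\mathbf d$, the leader group $\mathcal U(\mathbf d)\subseteq[K]$ consists of, for each file in $\mathcal D(\mathbf d)$, one user requesting it (say the smallest-index one); $R_{\mathrm{MCCS}}(\mathbf d;\mathbf a)=\sum_{\emptyset\ne\mathcal S\subseteq[K],\ \mathcal S\cap\mathcal U(\mathbf d)\ne\emptyset}\ \max_{k\in\mathcal S}a_{d_k,|\mathcal S|-1}$. (For $\mathbf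 d\in\mathcal T_K$, $\mathcal U(\mathbf d)=[K]$.) *)

From HB Require Import structures.
From mathcomp Require Import all_boot all_order all_algebra.
Set Implicit Arguments. Unset Strict Implicit. Unset Printing Implicit Defensive.
Import Order.TTheory GRing.Theory Num.Theory.
Local Open Scope ring_scope.

(* Files are indexed by 'I_N (file n+1 of the paper is the ordinal n),
   users by 'I_K, cache levels l by nat (only 0 <= l <= K matter).
   A placement vector is a : 'I_N -> nat -> R, a n l = a_{n+1,l}. *)

Section Defs.
Variable R : realFieldType.

Definition finmax (T : finType) (P : pred T) (f : T -> R) : R :=
  match [pick x | P x] with
  | Some x0 => \big[Num.max/f x0]_(x | P x) f x
  | None => 0
  end.

Variables N K : nat.

Definition feasible (M : R) (a : 'I_N -> nat -> R) : Prop :=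
  [/\ (forall (n : 'I_N) (l : nat), (l <= K)%N -> 0 <= a n l),
      (forall n : 'I_N, \sum_(l < K.+1) ('C(K, l))%:R * a n l = 1)
    & \sum_(n : 'I_N) \sum_(l < K.+1 | (0 < l)%N) ('C(K.-1, l.-1))%:R * a n l <= M].

Definition inQ (a : 'I_N -> nat -> R) : Prop :=
  forall (n n' : 'I_N) (l : nat), val n' = (val n).+1 -> (1 <= l <= K)%N ->
    a n' l <= a n l.

Definition Dset (d : {ffun 'I_K -> 'I_N}) : {set 'I_N} := [set d k | k : 'I_K].

Definition inT (d : {ffun 'I_K -> 'I_N}) : bool := injectiveb d.

(* lower bound: max over bijections pi : [|D|] -> D (0-indexed i stands for i+1) *)
Definition Rlb (D : {set 'I_N}) (a : 'I_N -> nat -> R) : R :=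
  finmax (fun pi : {ffun 'I_#|D| -> 'I_N} =>
            injectiveb pi && [forall i, pi i \in D])
         (fun pi => \sum_(l < K) \sum_(i < #|D|)
                      ('C(K - i.+1, l))%:R * a (pi i) l).

Definition leaders (d : {ffun 'I_K -> 'I_N}) : {set 'I_K} :=
  [set k : 'I_K | [forall k' : 'I_K, (k' < k)%N ==> (d k' != d k)]].

Definition Rmccs (d : {ffun 'I_K -> 'I_N}) (a : 'I_N -> nat -> R) : R :=
  \sum_(S : {set 'I_K} | (S != set0) && (S :&: leaders d != set0))
     finmax (fun k => k \in S) (fun k => a (d k) (#|S|.-1)).

Definition Zn (p : 'I_N -> R) : R :=
  \sum_(d : {ffun 'I_K -> 'I_N} | inT d) \prod_(i < K) p (d i).

Definition avg_Rmccs (p : 'I_N -> R) (a : 'I_N -> nat -> R) : R :=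
  \sum_(d : {ffun 'I_K -> 'I_N} | inT d)
     (\prod_(i < K) p (d i)) / Zn p * Rmccs d a.

Definition avg_Rlb (p : 'I_N -> R) (a : 'I_N -> nat -> R) : R :=
  \sum_(d : {ffun 'I_K -> 'I_N} | inT d)
     (\prod_(i < K) p (d i)) / Zn p * Rlb (Dset d) a.

Definition is_min (P : ('I_N -> nat -> R) -> Prop)
    (f : ('I_N -> nat -> R) -> R) (v : R) : Prop :=
  (exists a, P a /\ f a = v) /\ (forall a, P a -> v <= f a).

End Defs.

From HB Require Import structures.
From mathcomp Require Import all_boot all_order all_algebra.
From mathcomp Require Import zify.
Import Order.TTheory GRing.Theory Num.Theory.
Local Open Scope ring_scope.
Set Implicit Arguments. Unset Strict Implicit.

(* Let d be a demand with K distinct requests.  Then every user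
   is a leader, so R_MCCS(d; a) is a sum over all nonempty sets S of users of
   max_{k in S} a(d_k, |S|-1).  Fix a strict ranking r of the users; grouping
   each nonempty S by its r-minimal element k writes S = k ∪ T with T a subset
   of the users ranked above k, so
       R_MCCS = Σ_k Σ_{T ⊆ above(k)} max_{v in k ∪ T} a(d_v, |T|).
   On the other side, for a bijection pi onto the requested files ranking user
   k at position r(k), the lower-bound objective Σ_l Σ_i C(K-i,l) a(pi_i, l)
   equals Σ_k Σ_{T ⊆ above(k)} a(d_k, |T|), since C(m, l) counts the l-subsets
   of an m-set.  Hence every such objective is at most R_MCCS, and when r ranks
   users by file popularity the popularity-first constraint Q makes the maximum
   equal to a(d_k, |T|), so the bound is attained: R_MCCS = R_lb.  The
   equality of the two optimization problems follows pointwise. *)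

Lemma finmax_ge (R : realFieldType) (T : finType) (P : pred T) (f : T -> R) x :
  P x -> f x <= finmax P f.
Proof.
move=> Px; rewrite /finmax; case: pickP => [x1 Px1|none]; last by rewrite none in Px.
by rewrite (bigD1 x) //= le_max lexx.
Qed.

Lemma finmax_eq (R : realFieldType) (T : finType) (P : pred T) (f : T -> R) v :
  (exists2 x, P x & f x = v) -> (forall x, P x -> f x <= v) -> finmax P f = v.
Proof.
move=> [x0 Px0 <-] hle; apply/eqP; rewrite eq_le finmax_ge // andbT.
rewrite /finmax; case: pickP => [x1 Px1|none]; last by rewrite none in Px0.
apply: (big_ind (fun y => y <= f x0)) => [|y z hy hz|]; [exact: hle | | exact: hle].
by rewrite ge_max hy hz.
Qed.

(* A binomial-weighted sum is a sum over subsets: C(|A|, l) counts the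
   l-subsets of A. *)
Lemma sum_binomial_subsets (R : realFieldType) K (T : finType) (A : {set T})
    (c : nat -> R) :
  (#|A| < K)%N ->
  \sum_(l < K) ('C(#|A|, l))%:R * c l = \sum_(B : {set T} | B \subset A) c #|B|.
Proof.
case: K => // K ltAK.
have ltBK (B : {set T}) : B \subset A -> (#|B| < K.+1)%N.
  by move=> sBA; exact: leq_ltn_trans (subset_leq_card sBA) ltAK.
rewrite (partition_big (fun B : {set T} => (inord #|B| : 'I_K.+1)) xpredT) //=.
apply: eq_bigr => l _; rewrite (eq_bigr (fun _ => c l)); last first.
  by move=> B /andP[sBA /eqP <-]; rewrite inordK // ltBK.
rewrite sumr_const -cards_draws mulr_natl; congr (_ *+ _).
apply: eq_card => B; rewrite !inE -topredE /=; case sBA: (B \subset A) => //=.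
apply/eqP/eqP => [cardB|<-]; last by rewrite inordK // ltBK.
by apply: val_inj; rewrite /= -cardB inordK // ltBK.
Qed.

Definition above K (r : 'I_K -> nat) (k : 'I_K) : {set 'I_K} :=
  [set v | (r k < r v)%N].

Lemma notin_above K (r : 'I_K -> nat) k : k \notin above r k.
Proof. by rewrite inE ltnn. Qed.

Lemma card_ord_above K m : #|[set j : 'I_K | (m < j)%N]| = (K - m.+1)%N.
Proof.
rewrite -sum1_card big_mkcond /=.
rewrite (eq_bigr (fun j : 'I_K => nat_of_bool (m < j)%N)); last first.
  by move=> j _; rewrite inE; case: ltnP.
rewrite -(big_mkord xpredT (fun j => nat_of_bool (m < j)%N)).
elim: K => [|K IH]; first by rewrite big_geq.
by rewrite big_nat_recr //= IH; case: ltnP => /=; lia.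
Qed.

Lemma card_above K (tau : 'I_K -> 'I_K) : injective tau -> forall k,
  #|above (fun v => val (tau v)) k| = (K - (tau k).+1)%N.
Proof.
move=> tau_inj k; rewrite -card_ord_above -(card_preimset _ tau_inj).
by apply: eq_card => v; rewrite !inE.
Qed.

(* Every nonempty set S of users has exactly one element k with
   S = k ∪ T for some T above k, namely its r-minimum. *)
Definition min_split K (r : 'I_K -> nat) (k : 'I_K) (S : {set 'I_K}) : bool :=
  (k \in S) && (S :\ k \subset above r k).

Lemma min_split_unique K (r : 'I_K -> nat) S :
  injective r -> S != set0 -> exists2 k, min_split r k S &
    forall k', min_split r k' S -> k' = k.
Proof.
move=> r_inj /set0Pn[x xS]; case: (arg_minnP r xS) => k kS kmin.
have kdiff k' : k' != k -> k' \in S -> (r k < r k')%N.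
  move=> k'k k'S; rewrite ltn_neqAle kmin // andbT.
  by apply: contra k'k => /eqP /r_inj ->.
exists k.
  by apply/andP; split=> //; apply/subsetP => v /setD1P[vk vS]; rewrite inE kdiff.
move=> k' /andP[k'S /subsetP above_k']; apply/eqP; apply: contraT => k'k.
have : k \in S :\ k' by rewrite !inE eq_sym k'k.
move=> /above_k'; rewrite inE => /ltn_trans/(_ (kdiff _ k'k k'S)).
by rewrite ltnn.
Qed.

Lemma sum_nonempty_by_min (R : realFieldType) K (r : 'I_K -> nat) (F : {set 'I_K} -> R) :
  injective r ->
  \sum_(S : {set 'I_K} | S != set0) F S =
  \sum_(k : 'I_K) \sum_(T : {set 'I_K} | T \subset above r k) F (k |: T).
Proof.
move=> r_inj.
have block k : \sum_(T : {set 'I_K} | T \subset above r k) F (k |: T) =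
                \sum_(S | min_split r k S) F S.
  rewrite [RHS](reindex_onto (fun T => k |: T) (fun S => S :\ k)); last first.
    by move=> S /andP[kS _]; rewrite setD1K.
  apply: eq_bigl => T; rewrite /min_split setU11 /=.
  apply/idP/andP => [sT|[sT /eqP <-] //]; suff -> : (k |: T) :\ k = T by [].
  apply/setP => v; rewrite !inE; case: eqP => // ->.
  by rewrite (contraNF (subsetP sT k) (notin_above r k)).
under [RHS]eq_bigr do rewrite block big_mkcond.
rewrite exchange_big /= big_mkcond /=; apply: eq_bigr => S _.
case: eqP => [->|/eqP S0].
  by rewrite big1 // => k _; rewrite /min_split inE.
have [k ksplit kuniq] := min_split_unique r_inj S0.
rewrite (bigD1 k) //= ksplit big1 ?addr0 // => k' k'k.
by case: ifP => // /kuniq /eqP; rewrite (negbTE k'k).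
Qed.

Lemma inQ_mono (R : realFieldType) N K (a : 'I_N -> nat -> R) :
  inQ K a -> forall (n n' : 'I_N) l, (n <= n')%N -> (1 <= l <= K)%N ->
  a n' l <= a n l.
Proof.
move=> aQ n n' l le_nn' hl.
suff step m (n'' : 'I_N) : val n'' = (n + m)%N -> a n'' l <= a n l.
  by apply: (step (n' - n)%N); rewrite subnKC.
elim: m n'' => [|m IH] n'' def_n''.
  by rewrite (_ : n'' = n) //; apply: val_inj; rewrite def_n'' addn0.
have lt_nm : (n + m < N)%N by have := ltn_ord n''; rewrite def_n'' addnS; apply: ltnW.
by apply: le_trans (IH (Ordinal lt_nm) erefl); apply: aQ; rewrite //= def_n'' addnS.
Qed.

Section DistinctDemand.

Variables (R : realFieldType) (N K : nat) (a : 'I_N -> nat -> R).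
Variable d : {ffun 'I_K -> 'I_N}.
Hypothesis d_inj : injective d.

Definition lb_objective (pi : {ffun 'I_K -> 'I_N}) : R :=
  \sum_(l < K) \sum_(i < K) ('C(K - i.+1, l))%:R * a (pi i) l.

Lemma Rlb_distinct : Rlb K (Dset d) a =
  finmax (fun pi : {ffun 'I_K -> 'I_N} => injectiveb pi && [forall i, pi i \in Dset d])
         lb_objective.
Proof.
have cardD : #|Dset d| = K by rewrite card_imset // card_ord.
by rewrite /Rlb; move: #|Dset d| cardD => m ->.
Qed.

Lemma lb_objective_by_rank (pi : {ffun 'I_K -> 'I_N}) (tau : 'I_K -> 'I_K) :
  injective tau -> (forall k, pi (tau k) = d k) ->
  lb_objective pi = \sum_(k : 'I_K)
     \sum_(T : {set 'I_K} | T \subset above (fun v => val (tau v)) k) a (d k) #|T|.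
Proof.
move=> tau_inj pi_tau; rewrite /lb_objective.
under eq_bigr => l _.
  rewrite (reindex tau) /=; last exact: onW_bij (injF_bij tau_inj).
  under eq_bigr do rewrite pi_tau.
over.
rewrite exchange_big /=; apply: eq_bigr => k _.
rewrite -(sum_binomial_subsets (K := K)) ?card_above //.
by have := ltn_ord (tau k); lia.
Qed.

(* All users are leaders, so R_MCCS decomposes along any ranking. *)
Lemma Rmccs_by_rank (r : 'I_K -> nat) : injective r ->
  Rmccs d a = \sum_(k : 'I_K) \sum_(T : {set 'I_K} | T \subset above r k)
                 finmax (fun v => v \in k |: T) (fun v => a (d v) #|T|).
Proof.
move=> r_inj; have leadersT : leaders d = setT.
  apply/setP => k; rewrite !inE; apply/forallP => k'; apply/implyP => lt_k'k.
  by apply: contraTneq lt_k'k => /d_inj ->; rewrite ltnn.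
rewrite /Rmccs leadersT (eq_bigl (fun S => S != set0)) => [|S]; last by rewrite setIT andbb.
rewrite (sum_nonempty_by_min _ r_inj); apply: eq_bigr => k _; apply: eq_bigr => T sT.
by rewrite cardsU1 (contra (subsetP sT k)) ?notin_above.
Qed.

Lemma lb_objective_le_Rmccs (pi : {ffun 'I_K -> 'I_N}) :
  injective pi -> (forall i, pi i \in Dset d) -> lb_objective pi <= Rmccs d a.
Proof.
move=> pi_inj piD.
have pi_onto k : exists i, pi i == d k.
  have imD : [set pi i | i : 'I_K] = Dset d.
    apply/eqP; rewrite eqEcard; apply/andP; split.
      by apply/subsetP => _ /imsetP[i _ ->].
    by rewrite !card_imset // card_ord.
  have : d k \in [set pi i | i : 'I_K] by rewrite imD imset_f.
  by case/imsetP => i _ ->; exists i.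
pose tau k := xchoose (pi_onto k).
have pi_tau k : pi (tau k) = d k by apply/eqP; exact: (xchooseP (pi_onto k)).
have tau_inj : injective tau by move=> u v E; apply: d_inj; rewrite -!pi_tau E.
rewrite (lb_objective_by_rank tau_inj pi_tau) (Rmccs_by_rank (r := fun v => val (tau v))).
  by apply: ler_sum => k _; apply: ler_sum => T _; apply: finmax_ge; exact: setU11.
by move=> u v /val_inj /tau_inj.
Qed.

(* Popularity rank of user k: the number of users requesting a more popular
   (smaller-index) file.  It ranks the users in the order of their files. *)
Definition more_popular (k : 'I_K) : {set 'I_K} := [set u | (val (d u) < val (d k))%N].

Lemma more_popular_lt k : (#|more_popular k| < K)%N.
Proof.
rewrite -[X in (_ < X)%N]card_ord -cardsT; apply: proper_card; rewrite properT.
by apply/eqP => /setP/(_ k); rewrite !inE ltnn.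
Qed.

Definition pop_rank (k : 'I_K) : 'I_K := Ordinal (more_popular_lt k).

Lemma pop_rank_mono u k : (val (d u) < val (d k))%N -> (pop_rank u < pop_rank k)%N.
Proof.
move=> lt_uk; apply: proper_card; apply/properP; split.
  by apply/subsetP => w; rewrite !inE => /ltn_trans; apply.
by exists u; rewrite !inE ?ltnn.
Qed.

Lemma pop_rank_inj : injective pop_rank.
Proof.
move=> u k E; case: (ltngtP (val (d u)) (val (d k))) => [lt|lt|/val_inj/d_inj //].
- by move: (pop_rank_mono lt); rewrite E ltnn.
- by move: (pop_rank_mono lt); rewrite E ltnn.
Qed.

Lemma above_pop_rank k v : v \in above (fun u => val (pop_rank u)) k -> (d k <= d v)%N.
Proof.
rewrite inE => lt_rank; rewrite leqNgt; apply/negP => /pop_rank_mono.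
by move/(ltn_trans lt_rank); rewrite ltnn.
Qed.

(* Under the popularity-first constraint, the popularity ranking turns
   every maximum in R_MCCS into the term of its minimal user, so the
   corresponding bijection attains R_MCCS. *)
Lemma Rmccs_attained : inQ K a ->
  exists2 pi : {ffun 'I_K -> 'I_N}, injective pi /\ (forall i, pi i \in Dset d)
                                    & lb_objective pi = Rmccs d a.
Proof.
move=> aQ; pose pi := [ffun i => d (invF pop_rank_inj i)].
have pi_rank k : pi (pop_rank k) = d k by rewrite ffunE invF_f.
exists pi.
  split; last by move=> i; rewrite ffunE imset_f.
  by move=> i j; rewrite !ffunE => /d_inj; exact: (can_inj (f_invF pop_rank_inj)).
rewrite (lb_objective_by_rank pop_rank_inj pi_rank).
rewrite (Rmccs_by_rank (r := fun v => val (pop_rank v))); last first.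
  by move=> u v /val_inj /pop_rank_inj.
apply: eq_bigr => k _; apply: eq_bigr => T sT; apply/esym/finmax_eq.
  by exists k; rewrite ?setU11.
move=> v /setU1P[-> //| vT]; apply: (inQ_mono aQ (above_pop_rank (subsetP sT v vT))).
rewrite card_gt0 -[X in (_ <= X)%N]card_ord max_card andbT.
by apply/set0Pn; exists v.
Qed.

Lemma Rmccs_eq_Rlb : inQ K a -> Rmccs d a = Rlb K (Dset d) a.
Proof.
move=> aQ; rewrite Rlb_distinct; apply/esym/finmax_eq.
  have [pi [pi_inj piD] attained] := Rmccs_attained aQ.
  by exists pi => //; apply/andP; split; [apply/injectiveP | apply/forallP].
move=> pi /andP[/injectiveP pi_inj /forallP piD].
exact: lb_objective_le_Rmccs.
Qed.

End DistinctDemand.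

Lemma is_min_ext (R : realFieldType) N (P : ('I_N -> nat -> R) -> Prop) f g v :
  (forall a, P a -> f a = g a) -> (is_min P f v <-> is_min P g v).
Proof.
move=> fg; split=> -[[a [Pa <-]] minimal]; split.
- by exists a; rewrite fg.
- by move=> b Pb; rewrite -fg //; exact: minimal.
- by exists a; rewrite fg.
- by move=> b Pb; rewrite fg //; exact: minimal.
Qed.

Unset Implicit Arguments.

Theorem theorem3 (R : realFieldType) (N K : nat) (M : R) (p : 'I_N -> R) :
  (3 <= K)%N -> (K <= N)%N -> 0 <= M -> M <= N%:R ->
  (forall n : 'I_N, 0 < p n) ->
  \sum_(n : 'I_N) p n = 1 ->
  (forall n n' : 'I_N, (n <= n')%N -> p n' <= p n) ->
  (forall (a : 'I_N -> nat -> R), inQ K a ->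
     forall d : {ffun 'I_K -> 'I_N}, inT d ->
       Rmccs d a = Rlb K (Dset d) a)
  /\
  (forall v : R,
     is_min (fun a => feasible K M a /\ inQ K a) (avg_Rmccs K p) v <->
     is_min (fun a => feasible K M a /\ inQ K a) (avg_Rlb K p) v).
Proof.
move=> _ _ _ _ _ _ _.
split=> [a aQ d /injectiveP d_inj | v]; first exact: Rmccs_eq_Rlb.
apply: is_min_ext => a [_ aQ]; apply: eq_bigr => d /injectiveP d_inj.
by rewrite Rmccs_eq_Rlb.
Qed.
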